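(* For a regular dimension-reduced canonical form, the infimal value $\underline L^*$ and solution set $\widehat W$ are as follows. (a) If the problem is non-Lagrangian, then $W_\circ=W_1=\emptyset$, $W=\{0_q\}$, and $\underline L^*=\sum_{i=1}^q\gamma_i^{-2}l_i^2>0$ is attained on $\widehat W=\{0_q\}$. (b) If it is multiply-Lagrangian, then $\underline L^*=0$, attained on $\widehat W=W_\circ=W_1=\{0_q\}$, and also $W_q=\{0_q\}$ when $\gamma_q<0$. (c) If it is singly-Lagrangian, then $\widehat W$ is the unique nonempty member of $\{W_\circ,W_1,W_q\}$ (with $W_q$ considered only if $\gamma_q<0$). Specifically: if $\gamma_q>0$, then $\underline f<0$, and $\widehat W=W_\circ$ if $\overline f>0$, $\widehat W=W_1$ if $\overline f\le0$; if $\gamma_q<0$, then $\widehat W=W_\circ$, $W_1$ or $W_q$ according as $\underline f<0<\overline f$, $\overline f\le0$, or $\underline f\ge0$. When $\widehat W=W_\circ$: $\underline L^*=\hat\lambda^2\{l_0^2+\sum_{i=1}^q(1-\hat\lambda\gamma_i)^{-2}l_i^2\}$, attained uniquely at $w=w(\hat\lambda)$, where $\hat\lambda$ is the unique solution of $f(\lambda)=0$ in $\Lambda^\circ$. When $\widehat W=W_1$: $\underline L^*=\gamma_1^{-2}\{l_0^2+\sum_{i=2}^q(1-\gamma_i/\gamma_1)^{-2}l_i^2\}+\zeta_1^2$, attained at $w=(\hat y_1,\pm\zeta_1,\hat z_{(1)}^\top)^\top$, where $\zeta_1=\sqrt{-f_1/\gamma_1}\ge0$. When $\widehat W=W_q$: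 $\underline L^*=\gamma_q^{-2}\{l_0^2+\sum_{i=1}^{q-1}(1-\gamma_i/\gamma_q)^{-2}l_i^2\}+\zeta_q^2$, attained at $w=(\hat y_q,\hat z_{(q)}^\top,\pm\zeta_q)^\top$, where $\zeta_q=\sqrt{f_q/(-\gamma_q)}\ge0$. (Coordinates $\hat y_1,\hat y_q$ are absent when $m_0=0$.)
   Context: Regular dimension-reduced canonical form: $q\ge1$, $\gamma_1>\dots>\gamma_q$ nonzero reals with $\gamma_1>0$, $\Gamma^*=\operatorname{diag}(\gamma_1,\dots,\gamma_q)$, $\delta=(\delta_i)$ with $\delta_i\ge0$, $k^*\in\mathbb{R}$, $\varepsilon\ge0$; either ($m_0=0$) $\varepsilon=0$, $w=z\in\mathbb{R}^q$, $w_0=\delta$, $\Delta=\Gamma^*$, $d=0$; or ($m_0>0$) $\varepsilon>0$, $w=(y,z^\top)^\top\in\mathbb{R}^{q+1}$, $w_0=(0,\delta^\top)^\top$, $\Delta=\operatorname{diag}(0,\Gamma^* )$, $d=\varepsilon e_1$. Problem: minimise $L^*(w)=\|w-w_0\|^2$ over $W=\{w:Q^*(w)=0\}\neq\emptyset$, $Q^*(w)=w^\top\Delta w+2d^\top w-k^*$; $\underline L^*=\inf_WL^*$, $\widehat W$ the set of minimisers. Let $l_0=\varepsilon$ and $l_i=|\gamma_i|\delta_i$. Admissible region $\Lambda=(-\infty,\gamma_1^{-1}]$ if $\gamma_q>0$, $[\gamma_q^{-1},\gamma_1^{-1}]$ if $\gamma_q<0$; $\Lambda^\circ$ its interior. $W(\lambda)$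 is the set of $w\in W$ with $(I-\lambda\Delta)w=w_0+\lambda d$; $W_\circ=\bigcup_{\lambda\in\Lambda^\circ}W(\lambda)$, $W_1=W(\gamma_1^{-1})$, and (only if $\gamma_q<0$) $W_q=W(\gamma_q^{-1})$. For $\lambda\in\Lambda^\circ$: $w(\lambda)=(I-\lambda\Delta)^{-1}(w_0+\lambda d)$, $f(\lambda)=\sum_{i=1}^q(1-\lambda\gamma_i)^{-2}\gamma_i\delta_i^2+2\varepsilon^2\lambda-k^*$; $\underline f=\inf_{\Lambda^\circ}f$, $\overline f=\sup_{\Lambda^\circ}f$. Boundary quantities: $\hat y_1=\varepsilon\gamma_1^{-1}$, $\hat z_{(1)}\in\mathbb{R}^{q-1}$ with entries $(1-\gamma_i/\gamma_1)^{-1}\delta_i$ ($i=2,\dots,q$), $f_1=\sum_{i=2}^q\gamma_i(\hat z_{(1)})_i^2+2\varepsilon\hat y_1-k^*$; when $\gamma_q<0$: $\hat y_q=\varepsilon\gamma_q^{-1}$, $\hat z_{(q)}$ with entries $(1-\gamma_i/\gamma_q)^{-1}\delta_i$ ($i=1,\dots,q-1$), $f_q=\sum_{i=1}^{q-1}\gamma_i(\hat z_{(q)})_i^2+2\varepsilon\hat y_q-k^*$. The problem is non-Lagrangian if $m_0=0$, $k^*=0$, $\delta\neq0_q$ and $\gamma_q>0$; multiply-Lagrangian if $m_0=0$, $k^*=0$ and $\delta=0_q$; singly-Lagrangian otherwise. *)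

From Stdlib Require Import Reals List Arith.
Open Scope R_scope.

(* sumR f a b = f a + f (a+1) + ... + f b   (0 if b < a) *)
Definition sumR (f : nat -> R) (a b : nat) : R :=
  fold_right (fun i acc => f i + acc) 0 (seq a (S b - a)).

(* Data of a dimension-reduced canonical form.
   gam i, del i are meaningful for 1 <= i <= nq; eps is epsilon;
   m0pos = true  <-> m0 > 0. *)
Record CF := mkCF {
  nq : nat; gam : nat -> R; del : nat -> R; kst : R; eps : R; m0pos : bool }.

(* Vectors w: coordinate 0 is y (present only if m0 > 0),
   coordinates 1..nq are z_1..z_q; all other coordinates are 0. *)
Definition vec := nat -> R.

Definition inRange (c : CF) (i : nat) : Prop := (1 <= i <= nq c)%nat.

Definition inspace (c : CF) (w : vec) : Prop :=
  (m0pos c = false -> w 0%nat = 0) /\ (forall i, (nq c < i)%nat -> w i = 0).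

Definition w0 (c : CF) : vec :=
  fun i => if andb (1 <=? i)%nat (i <=? nq c)%nat then del c i else 0.

Definition DeltaC (c : CF) (i : nat) : R :=
  if andb (1 <=? i)%nat (i <=? nq c)%nat then gam c i else 0.
Definition dC (c : CF) (i : nat) : R := if (i =? 0)%nat then eps c else 0.

Definition Lst (c : CF) (w : vec) : R :=
  sumR (fun i => (w i - w0 c i) ^ 2) 0 (nq c).
Definition Qst (c : CF) (w : vec) : R :=
  sumR (fun i => gam c i * (w i) ^ 2) 1 (nq c) + 2 * (eps c * w 0%nat) - kst c.

Definition inW (c : CF) (w : vec) : Prop := inspace c w /\ Qst c w = 0.

Definition infL (c : CF) (x : R) : Prop :=
  (forall w, inW c w -> x <= Lst c w) /\
  (forall y, (forall w, inW c w -> y <= Lst c w) -> y <= x).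

Definition What (c : CF) (w : vec) : Prop :=
  inW c w /\ forall v, inW c v -> Lst c w <= Lst c v.

Definition regular (c : CF) : Prop :=
  (1 <= nq c)%nat /\
  (forall i j, (1 <= i)%nat -> (i < j)%nat -> (j <= nq c)%nat -> gam c j < gam c i) /\
  (forall i, inRange c i -> gam c i <> 0) /\
  0 < gam c 1 /\
  (forall i, inRange c i -> 0 <= del c i) /\
  0 <= eps c /\
  (m0pos c = false -> eps c = 0) /\
  (m0pos c = true -> 0 < eps c) /\
  (exists w, inW c w).

Definition inLamo (c : CF) (lam : R) : Prop :=
  (0 < gam c (nq c) -> lam < / gam c 1) /\
  (gam c (nq c) < 0 -> / gam c (nq c) < lam < / gam c 1).

Definition Wlam (c : CF) (lam : R) (w : vec) : Prop :=
  inW c w /\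
  forall i, (i <= nq c)%nat ->
    w i - lam * (DeltaC c i * w i) = w0 c i + lam * dC c i.

Definition Wcirc (c : CF) (w : vec) : Prop :=
  exists lam, inLamo c lam /\ Wlam c lam w.
Definition W1 (c : CF) : vec -> Prop := Wlam c (/ gam c 1).
Definition Wq (c : CF) : vec -> Prop := Wlam c (/ gam c (nq c)).

Definition wlam (c : CF) (lam : R) : vec :=
  fun i => if (i =? 0)%nat then lam * eps c
           else if (i <=? nq c)%nat then del c i / (1 - lam * gam c i) else 0.

Definition fC (c : CF) (lam : R) : R :=
  sumR (fun i => gam c i * (del c i) ^ 2 / (1 - lam * gam c i) ^ 2) 1 (nq c)
  + 2 * (eps c) ^ 2 * lam - kst c.

Definition lC (c : CF) (i : nat) : R :=
  if (i =? 0)%nat then eps c else Rabs (gam c i) * del c i.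

(* boundary quantities at lambda = 1/gam_1 *)
Definition yhat1 (c : CF) : R := eps c / gam c 1.
Definition zhat1 (c : CF) (i : nat) : R := del c i / (1 - gam c i / gam c 1).
Definition f1 (c : CF) : R :=
  sumR (fun i => gam c i * (zhat1 c i) ^ 2) 2 (nq c) + 2 * (eps c * yhat1 c) - kst c.
Definition zeta1 (c : CF) : R := sqrt (- f1 c / gam c 1).
Definition v1 (c : CF) (sgn : R) : vec :=
  fun i => if (i =? 0)%nat then yhat1 c
           else if (i =? 1)%nat then sgn * zeta1 c
           else if (i <=? nq c)%nat then zhat1 c i else 0.

(* boundary quantities at lambda = 1/gam_q *)
Definition yhatq (c : CF) : R := eps c / gam c (nq c).
Definition zhatq (c : CF) (i : nat) : R := del c i / (1 - gam c i / gam c (nq c)).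
Definition fq (c : CF) : R :=
  sumR (fun i => gam c i * (zhatq c i) ^ 2) 1 (nq c - 1) + 2 * (eps c * yhatq c) - kst c.
Definition zetaq (c : CF) : R := sqrt (fq c / (- gam c (nq c))).
Definition vq (c : CF) (sgn : R) : vec :=
  fun i => if (i =? 0)%nat then yhatq c
           else if (i =? nq c)%nat then sgn * zetaq c
           else if (i <? nq c)%nat then zhatq c i else 0.

Definition set_eq (A B : vec -> Prop) : Prop := forall w, A w <-> B w.
Definition single (v : vec) : vec -> Prop := fun w => forall i, w i = v i.
Definition nonempty (A : vec -> Prop) : Prop := exists w, A w.
Definition emptyS (A : vec -> Prop) : Prop := forall w, ~ A w.
Definition zerov : vec := fun _ => 0.

Definition nonLag (c : CF) : Prop :=
  m0pos c = false /\ kst c = 0 /\ (exists i, inRange c i /\ del c i <> 0)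
  /\ 0 < gam c (nq c).
Definition multLag (c : CF) : Prop :=
  m0pos c = false /\ kst c = 0 /\ (forall i, inRange c i -> del c i = 0).
Definition singLag (c : CF) : Prop := ~ nonLag c /\ ~ multLag c.

From Stdlib Require Import Reals List Arith Lra Lia Psatz FunctionalExtensionality Classical.
Open Scope R_scope.

(* If [u] lies in [W(lam)] for an admissible [lam] (all [1 - lam gam_i >= 0]), then for every
   [w] in [W], [L*(w) - L*(u) = (y - y_u)^2 + sum_i (1 - lam gam_i) (z_i - z_u,i)^2], so [u]
   is a minimiser and every minimiser lies in [W(lam)].  Unless the problem is multiply
   Lagrangian, distinct multipliers have disjoint sets [W(lam)], so at most one of [W_circ],
   [W_1], [W_q] is nonempty; which one is decided by the sign of [f].  A zero of [f] in the
   open region gives the point [w(lam)]; if [f] keeps the wrong sign up to an endpoint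
   [/ gam_j], the pole [gam_j del_j^2 / (1 - lam gam_j)^2] of [f] must be absent and the
   limiting equation produces the two endpoint minimisers [+-zeta_j]. *)

(** * Finite sums *)

Definition lsum (f : nat -> R) (l : list nat) : R :=
  fold_right (fun i acc => f i + acc) 0 l.

Lemma sumR_lsum f a b : sumR f a b = lsum f (seq a (S b - a)).
Proof. reflexivity. Qed.

Lemma in_sumR_range a b i : In i (seq a (S b - a)) <-> (a <= i <= b)%nat.
Proof. rewrite in_seq. lia. Qed.

Lemma lsum_ext f g l : (forall i, In i l -> f i = g i) -> lsum f l = lsum g l.
Proof.
  induction l as [|x l IH]; simpl; intros H; [reflexivity|].
  rewrite H, IH by auto. reflexivity.
Qed.

Lemma lsum_app f l1 l2 : lsum f (l1 ++ l2) = lsum f l1 + lsum f l2.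
Proof. induction l1 as [|x l IH]; simpl; [|rewrite IH]; ring. Qed.

Lemma lsum_le f g l : (forall i, In i l -> f i <= g i) -> lsum f l <= lsum g l.
Proof.
  induction l as [|x l IH]; simpl; intros H; [lra|].
  apply Rplus_le_compat; auto.
Qed.

Lemma lsum_plus f g l : lsum (fun i => f i + g i) l = lsum f l + lsum g l.
Proof. induction l as [|x l IH]; simpl; [ring|]. rewrite IH. ring. Qed.

Lemma lsum_scal k f l : lsum (fun i => k * f i) l = k * lsum f l.
Proof. induction l as [|x l IH]; simpl; [ring|]. rewrite IH. ring. Qed.

Lemma lsum_nonneg f l : (forall i, In i l -> 0 <= f i) -> 0 <= lsum f l.
Proof.
  induction l as [|x l IH]; simpl; intros H; [lra|].
  apply Rplus_le_le_0_compat; auto.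
Qed.

Lemma lsum_nonneg_eq0 f l : (forall i, In i l -> 0 <= f i) -> lsum f l = 0 ->
  forall i, In i l -> f i = 0.
Proof.
  induction l as [|x l IH]; simpl; intros H Hs i Hi; [contradiction|].
  assert (0 <= lsum f l) by (apply lsum_nonneg; auto).
  pose proof (H x (or_introl eq_refl)).
  destruct Hi as [<- | Hi]; [lra|]. apply IH; auto; lra.
Qed.

Lemma lsum_pick f l j : NoDup l -> In j l ->
  lsum f l = f j + lsum (fun i => if (i =? j)%nat then 0 else f i) l.
Proof.
  induction l as [|x l IH]; simpl; intros Hnd Hj; [contradiction|]. inversion Hnd as [|? ? Hx Hnd']. subst.
  destruct (Nat.eqb_spec x j) as [->|Hxj].
  - rewrite (lsum_ext (fun i => if (i =? j)%nat then 0 else f i) f); [ring|].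
    intros i Hi. destruct (Nat.eqb_spec i j) as [->|]; [contradiction | reflexivity].
  - destruct Hj as [|Hj]; [contradiction|]. rewrite IH by auto. ring.
Qed.

Section SumR.
Variables (a b : nat).

Lemma sumR_ext f g : (forall i, (a <= i <= b)%nat -> f i = g i) -> sumR f a b = sumR g a b.
Proof. intros H. apply lsum_ext. intros i Hi. apply H, in_sumR_range, Hi. Qed.

Lemma sumR_le f g : (forall i, (a <= i <= b)%nat -> f i <= g i) -> sumR f a b <= sumR g a b.
Proof. intros H. apply lsum_le. intros i Hi. apply H, in_sumR_range, Hi. Qed.

Lemma sumR_plus f g : sumR (fun i => f i + g i) a b = sumR f a b + sumR g a b.
Proof. apply lsum_plus. Qed.

Lemma sumR_scal k f : sumR (fun i => k * f i) a b = k * sumR f a b.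
Proof. apply lsum_scal. Qed.

Lemma sumR_const0 : sumR (fun _ => 0) a b = 0.
Proof.
  unfold sumR. generalize (seq a (S b - a)). intros l.
  induction l as [|x l IH]; simpl; [|rewrite IH]; ring.
Qed.

Lemma sumR_nonneg f : (forall i, (a <= i <= b)%nat -> 0 <= f i) -> 0 <= sumR f a b.
Proof. intros H. apply lsum_nonneg. intros i Hi. apply H, in_sumR_range, Hi. Qed.

Lemma sumR_nonneg_eq0 f : (forall i, (a <= i <= b)%nat -> 0 <= f i) -> sumR f a b = 0 ->
  forall i, (a <= i <= b)%nat -> f i = 0.
Proof.
  intros H Hs i Hi. apply (lsum_nonneg_eq0 f _ (fun j Hj => H j (proj1 (in_sumR_range a b j) Hj)) Hs).
  apply in_sumR_range, Hi.
Qed.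

Lemma sumR_pos f j : (forall i, (a <= i <= b)%nat -> 0 <= f i) -> (a <= j <= b)%nat -> 0 < f j ->
  0 < sumR f a b.
Proof.
  intros H Hj Hfj. destruct (Rle_lt_or_eq_dec _ _ (sumR_nonneg f H)) as [|Hs]; auto.
  pose proof (sumR_nonneg_eq0 f H (eq_sym Hs) j Hj). lra.
Qed.

Lemma sumR_first f : (a <= b)%nat -> sumR f a b = f a + sumR f (S a) b.
Proof. intros H. unfold sumR. replace (S b - a)%nat with (S (S b - S a)) by lia. reflexivity. Qed.

Lemma sumR_last f : (a <= b)%nat -> (1 <= b)%nat -> sumR f a b = sumR f a (b - 1) + f b.
Proof.
  intros H H1. rewrite !sumR_lsum. replace (S b - a)%nat with (S (S (b - 1) - a)) by lia.
  rewrite seq_S, lsum_app. replace (a + (S (b - 1) - a))%nat with b by lia. simpl. ring.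
Qed.

Lemma sumR_pick f j : (a <= j <= b)%nat ->
  sumR f a b = f j + sumR (fun i => if (i =? j)%nat then 0 else f i) a b.
Proof. intros Hj. apply lsum_pick; [apply seq_NoDup | apply in_sumR_range, Hj]. Qed.

End SumR.

(** * Real analysis *)

Lemma continuity_pt_cst (a x : R) : continuity_pt (fun _ => a) x.
Proof. apply continuity_pt_const. intros u v. reflexivity. Qed.

Lemma continuity_pt_sumR (F : nat -> R -> R) a b x :
  (forall i, (a <= i <= b)%nat -> continuity_pt (F i) x) ->
  continuity_pt (fun y => sumR (fun i => F i y) a b) x.
Proof.
  intros H. unfold sumR. generalize (fun i Hi => H i (proj1 (in_sumR_range a b i) Hi)).
  generalize (seq a (S b - a)). intros l. induction l as [|i l IH]; simpl; intros Hl.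
  - apply continuity_pt_cst.
  - exact (continuity_pt_plus (F i) _ x (Hl i (or_introl eq_refl)) (IH (fun j Hj => Hl j (or_intror Hj)))).
Qed.

Lemma continuity_pt_affine_shift (S : R -> R) a b x : continuity_pt S x ->
  continuity_pt (fun y => S y + a * y - b) x.
Proof.
  intros H. assert (Hl : continuity_pt (fun y => a * y) x) by reg.
  exact (continuity_pt_minus (fun y => S y + a * y) (fun _ => b) x
    (continuity_pt_plus S (fun y => a * y) x H Hl) (continuity_pt_cst b x)).
Qed.

Lemma continuity_pt_inv_sqr A g x : 1 - x * g <> 0 -> continuity_pt (fun y => A / (1 - y * g) ^ 2) x.
Proof. intros H. reg. apply pow_nonzero, H. Qed.

Lemma continuity_pt_nonpos_right (H : R -> R) a : 0 < a -> continuity_pt H 0 ->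
  (forall t, 0 < t < a -> H t <= 0) -> H 0 <= 0.
Proof.
  intros Ha Hc Hneg. apply Rnot_lt_le. intros Hpos.
  destruct (Hc (H 0) Hpos) as [d [Hd Hclose]].
  set (t := Rmin a d / 2). pose proof (Rmin_l a d). pose proof (Rmin_r a d).
  assert (0 < Rmin a d) by (apply Rmin_glb_lt; lra).
  assert (Hdist : Rabs (H t - H 0) < H 0).
  { apply Hclose. split; [split; [exact I | unfold t; lra]|].
    simpl. unfold R_dist. rewrite Rminus_0_r, Rabs_right; unfold t; lra. }
  pose proof (Rabs_def2 _ _ Hdist). pose proof (Hneg t ltac:(unfold t; lra)). lra.
Qed.

Lemma Rdiv_le_0_compat a b : 0 <= a -> 0 < b -> 0 <= a / b.
Proof. intros. apply Rmult_le_pos; [|left; apply Rinv_0_lt_compat]; auto. Qed.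

Lemma exists_div_lt_affine D e k : 0 <= D -> 0 <= e -> 0 < e \/ 0 < k ->
  exists T, 0 < T /\ D / T < k + e * T.
Proof.
  intros HD He [He'|Hk].
  - pose proof (Rle_abs (- k)). rewrite Rabs_Ropp in H. pose proof (Rabs_pos k).
    set (T := (D + Rabs k + 1) / e + 1).
    assert (HT : 1 <= T) by (enough (0 <= (D + Rabs k + 1) / e) by (unfold T; lra);
      apply Rdiv_le_0_compat; lra).
    exists T. split; [lra|].
    assert (D / T <= D).
    { apply (Rmult_le_reg_r T); [lra|]. replace (D / T * T) with D by (field; lra). nra. }
    assert (e * T = D + Rabs k + 1 + e) by (unfold T; field; lra). lra.
  - exists (D / k + 1). assert (0 <= D / k) by (apply Rdiv_le_0_compat; lra).
    split; [lra|]. apply (Rmult_lt_reg_r (D / k + 1)); [lra|].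
    replace (D / (D / k + 1) * (D / k + 1)) with D by (field; lra).
    assert (k * (D / k + 1) = D + k) by (field; lra).
    assert (0 <= e * (D / k + 1) * (D / k + 1)) by (apply Rmult_le_pos; [apply Rmult_le_pos|]; lra).
    nra.
Qed.

Lemma IVT_opposite_signs (f : R -> R) a b :
  (forall x, Rmin a b <= x <= Rmax a b -> continuity_pt f x) -> f a < 0 -> 0 < f b ->
  exists z, Rmin a b <= z <= Rmax a b /\ f z = 0.
Proof.
  intros Hc Ha Hb. unfold Rmin, Rmax in *. destruct (Rle_dec a b) as [Hab|Hab].
  - destruct (Ranalysis5.IVT_interv f a b Hc) as [z Hz]; [destruct Hab; [auto|subst; lra] | auto | auto |].
    exists z. exact Hz.
  - destruct (Ranalysis5.IVT_interv (fun x => - f x) b a) as [z [Hz Hfz]]; [|lra|lra|lra|].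
    + intros x Hx. exact (continuity_pt_opp f x (Hc x Hx)).
    + exists z. split; [exact Hz | lra].
Qed.

Lemma single_eq v w : single v w <-> w = v.
Proof.
  split; [intros H; apply functional_extensionality, H | intros ->; intros i; reflexivity].
Qed.

Lemma sqr_eq_cases a b : 0 <= b -> a ^ 2 = b ^ 2 -> a = b \/ a = - b.
Proof.
  intros Hb H. assert (Hf : (a - b) * (a + b) = 0) by nra.
  destruct (Rmult_integral _ _ Hf); [left|right]; lra.
Qed.

Lemma sqr_abs_mul g d : (Rabs g * d) ^ 2 = g ^ 2 * d ^ 2.
Proof. rewrite Rpow_mult_distr, pow2_abs. reflexivity. Qed.

Section CanonicalForm.
Variable c : CF.
Hypothesis Hreg : regular c.

Lemma nq_ge1 : (1 <= nq c)%nat.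
Proof. apply Hreg. Qed.

Lemma gam_decr i j : (1 <= i)%nat -> (i < j)%nat -> (j <= nq c)%nat -> gam c j < gam c i.
Proof. apply Hreg. Qed.

Lemma gam_neq0 i : inRange c i -> gam c i <> 0.
Proof. apply Hreg. Qed.

Lemma gam1_pos : 0 < gam c 1.
Proof. apply Hreg. Qed.

Lemma del_ge0 i : inRange c i -> 0 <= del c i.
Proof. apply Hreg. Qed.

Lemma eps_ge0 : 0 <= eps c.
Proof. apply Hreg. Qed.

Lemma eps_m0false : m0pos c = false -> eps c = 0.
Proof. apply Hreg. Qed.

Lemma eps_m0true : m0pos c = true -> 0 < eps c.
Proof. apply Hreg. Qed.

Lemma inW_nonempty : exists w, inW c w.
Proof. apply Hreg. Qed.

Lemma inRange_1 : inRange c 1.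
Proof. split; [lia | apply nq_ge1]. Qed.

Lemma inRange_nq : inRange c (nq c).
Proof. split; [apply nq_ge1 | lia]. Qed.

Lemma gam_le_gam1 i : inRange c i -> gam c i <= gam c 1.
Proof.
  intros [H1 H2]. destruct (Nat.eq_dec i 1) as [->|]; [lra|]. left; apply gam_decr; lia.
Qed.

Lemma gam_lt_gam1 i : inRange c i -> i <> 1%nat -> gam c i < gam c 1.
Proof. intros [H1 H2] Hi. apply gam_decr; lia. Qed.

Lemma gamq_le_gam i : inRange c i -> gam c (nq c) <= gam c i.
Proof.
  intros [H1 H2]. destruct (Nat.eq_dec i (nq c)) as [->|]; [lra|]. left; apply gam_decr; lia.
Qed.

Lemma gamq_lt_gam i : inRange c i -> i <> nq c -> gam c (nq c) < gam c i.
Proof. intros [H1 H2] Hi. apply gam_decr; lia. Qed.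

Lemma gamq_sign : 0 < gam c (nq c) \/ gam c (nq c) < 0.
Proof. pose proof (gam_neq0 _ inRange_nq). lra. Qed.

Lemma nq_ge2 : gam c (nq c) < 0 -> (2 <= nq c)%nat.
Proof.
  intros Hq. destruct (Nat.eq_dec (nq c) 1) as [E|E]; [|pose proof nq_ge1; lia].
  rewrite E in Hq. pose proof gam1_pos. lra.
Qed.

Definition admissible (lam : R) : Prop := forall i, inRange c i -> 0 <= 1 - lam * gam c i.

Lemma inLamo_pos lam : inLamo c lam -> forall i, inRange c i -> 0 < 1 - lam * gam c i.
Proof.
  intros [Hp Hn] i Hi.
  pose proof (gam_le_gam1 i Hi). pose proof (gamq_le_gam i Hi). pose proof gam1_pos.
  assert (gam c 1 * / gam c 1 = 1) by (field; lra).
  assert (0 < / gam c 1) by (apply Rinv_0_lt_compat; lra).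
  destruct (Rlt_or_le 0 (gam c i)).
  - destruct gamq_sign as [Hq|Hq]; [specialize (Hp Hq) | destruct (Hn Hq)]; nra.
  - pose proof (gam_neq0 i Hi).
    assert (Hq : gam c (nq c) < 0) by lra. destruct (Hn Hq).
    assert (gam c (nq c) * / gam c (nq c) = 1) by (field; lra).
    assert (/ gam c (nq c) < 0) by (apply Rinv_lt_0_compat; lra).
    nra.
Qed.

Lemma admissible_inLamo lam : inLamo c lam -> admissible lam.
Proof. intros H i Hi. left. apply inLamo_pos; auto. Qed.

Lemma admissible_gam1 : admissible (/ gam c 1).
Proof.
  intros i Hi. pose proof (gam_le_gam1 i Hi). pose proof gam1_pos.
  enough (/ gam c 1 * gam c i <= 1) by lra.
  apply (Rmult_le_reg_l (gam c 1)); [lra|]. field_simplify; lra.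
Qed.

Lemma admissible_gamq : gam c (nq c) < 0 -> admissible (/ gam c (nq c)).
Proof.
  intros Hq i Hi. pose proof (gamq_le_gam i Hi).
  assert (gam c (nq c) * / gam c (nq c) = 1) by (field; lra).
  assert (/ gam c (nq c) < 0) by (apply Rinv_lt_0_compat; lra).
  nra.
Qed.

Lemma inLamo_0 : inLamo c 0.
Proof.
  pose proof gam1_pos. split; intros Hq.
  - apply Rinv_0_lt_compat; lra.
  - split; [apply Rinv_lt_0_compat | apply Rinv_0_lt_compat]; lra.
Qed.

Lemma inLamo_between l1 l2 x : inLamo c l1 -> inLamo c l2 -> l1 <= x <= l2 -> inLamo c x.
Proof.
  intros [A1 B1] [A2 B2] Hx. split; intros Hq.
  - specialize (A2 Hq); lra.
  - specialize (B1 Hq); specialize (B2 Hq); lra.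
Qed.

Lemma inLamo_neq_gam1 lam : inLamo c lam -> lam <> / gam c 1.
Proof.
  intros [Hp Hn]. destruct gamq_sign as [Hq|Hq]; [specialize (Hp Hq) | destruct (Hn Hq)]; lra.
Qed.

Lemma inLamo_neq_gamq lam : inLamo c lam -> lam <> / gam c (nq c).
Proof.
  intros [Hp Hn]. destruct gamq_sign as [Hq|Hq]; [|destruct (Hn Hq); lra].
  specialize (Hp Hq). pose proof (gam_le_gam1 _ inRange_nq).
  assert (/ gam c 1 <= / gam c (nq c)) by (apply Rinv_le_contravar; lra). lra.
Qed.

Lemma gam1_neq_gamq : gam c (nq c) < 0 -> / gam c 1 <> / gam c (nq c).
Proof.
  intros Hq. pose proof (Rinv_0_lt_compat _ gam1_pos).
  pose proof (Rinv_lt_0_compat _ Hq). lra.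
Qed.

Lemma Lst_split w : Lst c w = w 0%nat ^ 2 + sumR (fun i => (w i - del c i) ^ 2) 1 (nq c).
Proof.
  unfold Lst. rewrite sumR_first by lia. change (w0 c 0%nat) with 0. f_equal; [ring|].
  apply sumR_ext. intros i [H1 H2]. unfold w0.
  apply Nat.leb_le in H1, H2. rewrite H1, H2. reflexivity.
Qed.

Lemma Wlam_coord0 lam w : Wlam c lam w -> w 0%nat = lam * eps c.
Proof.
  intros [_ H]. specialize (H 0%nat (Nat.le_0_l _)). unfold DeltaC, w0, dC in H. simpl in H. lra.
Qed.

Lemma Wlam_coord lam w : Wlam c lam w -> forall i, inRange c i -> (1 - lam * gam c i) * w i = del c i.
Proof.
  intros [_ H] i [H1 H2]. specialize (H i H2). unfold DeltaC, w0, dC in H.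
  destruct i as [|i]; [lia|]. apply Nat.leb_le in H2. rewrite H2 in H. simpl in H. lra.
Qed.

Lemma Wlam_intro lam w : inW c w -> w 0%nat = lam * eps c ->
  (forall i, inRange c i -> (1 - lam * gam c i) * w i = del c i) -> Wlam c lam w.
Proof.
  intros HW H0 Hi. split; [exact HW|]. intros [|i] Hle; [unfold DeltaC, w0, dC; simpl; lra|].
  specialize (Hi (S i) ltac:(split; lia)). unfold DeltaC, w0, dC.
  apply Nat.leb_le in Hle. rewrite Hle. simpl. lra.
Qed.


(** * Minimisers and the sets [W(lam)] *)

(* On [W] the Lagrangian [L* - lam Q*] equals [L*], and it is a quadratic form centred at its
   stationary point [u]. *)
Lemma Lst_sub_Wlam lam u w : Wlam c lam u -> inW c w ->
  Lst c w - Lst c u =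
  (w 0%nat - u 0%nat) ^ 2 + sumR (fun i => (1 - lam * gam c i) * (w i - u i) ^ 2) 1 (nq c).
Proof.
  intros Hu [_ Qw]. pose proof (Wlam_coord0 lam u Hu) as Hu0.
  pose proof (Wlam_coord lam u Hu) as Hui. destruct Hu as [[_ Qu] _]. unfold Qst in Qu, Qw.
  assert (Hcomb : sumR (fun i => (1 - lam * gam c i) * (w i - u i) ^ 2) 1 (nq c) =
    sumR (fun i => (w i - del c i) ^ 2) 1 (nq c) + (- 1) * sumR (fun i => (u i - del c i) ^ 2) 1 (nq c)
    + (- lam) * (sumR (fun i => gam c i * w i ^ 2) 1 (nq c)
                 + (- 1) * sumR (fun i => gam c i * u i ^ 2) 1 (nq c))).
  { rewrite <- !sumR_scal, <- !sumR_plus, <- sumR_scal, <- sumR_plus. apply sumR_ext.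
    intros i Hi. rewrite <- (Hui i) by (split; lia). ring. }
  rewrite !Lst_split, Hcomb, Hu0. nra.
Qed.

Lemma sumR_weighted_sq_nonneg lam (x : vec) : admissible lam ->
  0 <= sumR (fun i => (1 - lam * gam c i) * x i ^ 2) 1 (nq c).
Proof.
  intros Ha. apply sumR_nonneg. intros i Hi.
  apply Rmult_le_pos; [apply Ha; split; lia | apply pow2_ge_0].
Qed.

Lemma Wlam_What lam u : admissible lam -> Wlam c lam u -> What c u.
Proof.
  intros Ha Hu. split; [apply Hu|]. intros v Hv. pose proof (Lst_sub_Wlam lam u v Hu Hv).
  pose proof (sumR_weighted_sq_nonneg lam (fun i => v i - u i) Ha).
  pose proof (pow2_ge_0 (v 0%nat - u 0%nat)). lra.
Qed.

Lemma What_Wlam lam u w : admissible lam -> Wlam c lam u -> What c w -> Wlam c lam w.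
Proof.
  intros Ha Hu [Hw Hmin].
  pose proof (Lst_sub_Wlam lam u w Hu Hw) as Hd. pose proof (Hmin u (proj1 Hu)).
  pose proof (Wlam_What lam u Ha Hu) as [_ Hu_min]. specialize (Hu_min w Hw).
  pose proof (sumR_weighted_sq_nonneg lam (fun i => w i - u i) Ha) as HS.
  pose proof (pow2_ge_0 (w 0%nat - u 0%nat)).
  assert (Hz0 : (w 0%nat - u 0%nat) ^ 2 = 0) by lra.
  assert (Hzi := sumR_nonneg_eq0 1 (nq c) _
    (fun i Hi => Rmult_le_pos _ _ (Ha i ltac:(split; lia)) (pow2_ge_0 (w i - u i))) ltac:(lra)).
  apply Wlam_intro; [exact Hw | rewrite <- (Wlam_coord0 lam u Hu); nra |].
  intros i Hi. rewrite <- (Wlam_coord lam u Hu i Hi).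
  specialize (Hzi i ltac:(destruct Hi; lia)). cbv beta in Hzi.
  destruct (Rmult_integral _ _ Hzi) as [->|Hz]; [ring|].
  replace (w i) with (u i) by nra. reflexivity.
Qed.

Lemma What_eq_Wlam lam : admissible lam -> nonempty (Wlam c lam) -> set_eq (What c) (Wlam c lam).
Proof.
  intros Ha [u Hu] w. split; [apply What_Wlam with u; auto | apply Wlam_What; auto].
Qed.

Lemma What_infL w : What c w -> infL c (Lst c w).
Proof. intros [Hw Hmin]. split; auto. Qed.


(* Two distinct multipliers share a point only if [eps = 0] and [w = 0] on [1..q], which
   through [Q*(w) = 0] forces [k* = 0]: the multiply-Lagrangian case. *)
Lemma Wlam_disjoint l1 l2 w : singLag c -> l1 <> l2 -> Wlam c l1 w -> Wlam c l2 w -> False.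
Proof.
  intros [_ HmL] Hne H1 H2.
  assert (He : eps c = 0).
  { pose proof (Wlam_coord0 _ _ H1). pose proof (Wlam_coord0 _ _ H2).
    destruct (Rmult_integral (l1 - l2) (eps c)) as [|]; [nra | lra | auto]. }
  assert (Hw : forall i, inRange c i -> w i = 0).
  { intros i Hi. pose proof (Wlam_coord _ _ H1 i Hi). pose proof (Wlam_coord _ _ H2 i Hi).
    pose proof (gam_neq0 i Hi).
    destruct (Rmult_integral ((l2 - l1) * gam c i) (w i)) as [Hz|]; [nra| |auto].
    destruct (Rmult_integral _ _ Hz); lra. }
  apply HmL. repeat split.
  - destruct (m0pos c) eqn:E; auto. pose proof (eps_m0true E). lra.
  - destruct H1 as [[_ Q] _]. unfold Qst in Q.
    rewrite (sumR_ext _ _ _ (fun _ => 0)), sumR_const0, He in Q; [lra|].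
    intros i Hi. rewrite Hw by (split; lia). ring.
  - intros i Hi. rewrite <- (Wlam_coord _ _ H1 i Hi), Hw; auto; ring.
Qed.

Lemma Wlam_exclusive l1 l2 : singLag c -> admissible l1 -> admissible l2 -> l1 <> l2 ->
  nonempty (Wlam c l1) -> emptyS (Wlam c l2).
Proof.
  intros HS A1 A2 Hne [u Hu] w Hw.
  apply (Wlam_disjoint l1 l2 u HS Hne Hu). apply (What_Wlam l2 w); auto.
  apply (Wlam_What l1); auto.
Qed.

Lemma What_eq_Wcirc lam : inLamo c lam -> nonempty (Wlam c lam) -> set_eq (What c) (Wcirc c).
Proof.
  intros Hl Hne w. split.
  - intros Hw. exists lam. split; auto. apply (What_eq_Wlam lam); auto. apply admissible_inLamo; auto.
  - intros [l [Hl' Hw]]. apply (Wlam_What l); auto. apply admissible_inLamo; auto.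
Qed.

Lemma Wcirc_empty l : singLag c -> admissible l -> (forall lam, inLamo c lam -> lam <> l) ->
  nonempty (Wlam c l) -> emptyS (Wcirc c).
Proof.
  intros HS Ha Hn Hne w [lam [Hl Hw]].
  apply (Wlam_exclusive l lam HS Ha (admissible_inLamo lam Hl)) with w; auto.
  intros E. apply (Hn lam Hl). auto.
Qed.


(** * Interior and endpoint multipliers *)

Lemma wlam_coord0 lam : wlam c lam 0%nat = lam * eps c.
Proof. reflexivity. Qed.

Lemma wlam_coord lam i : inRange c i -> wlam c lam i = del c i / (1 - lam * gam c i).
Proof.
  intros [H1 H2]. unfold wlam. destruct i as [|i]; [lia|]. apply Nat.leb_le in H2.
  simpl Nat.eqb. rewrite H2. reflexivity.
Qed.

Lemma wlam_out lam i : (nq c < i)%nat -> wlam c lam i = 0.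
Proof.
  intros H. unfold wlam. destruct i as [|i]; [lia|]. simpl Nat.eqb.
  replace (S i <=? nq c)%nat with false by (symmetry; apply Nat.leb_gt; lia). reflexivity.
Qed.

Lemma Qst_wlam lam : inLamo c lam -> Qst c (wlam c lam) = fC c lam.
Proof.
  intros Hl. unfold Qst, fC. rewrite wlam_coord0.
  rewrite (sumR_ext _ _ _ (fun i => gam c i * del c i ^ 2 / (1 - lam * gam c i) ^ 2)); [ring|].
  intros i Hi. assert (HR : inRange c i) by (split; lia).
  rewrite wlam_coord by auto. pose proof (inLamo_pos lam Hl i HR). field. lra.
Qed.

Lemma wlam_Wlam lam : inLamo c lam -> fC c lam = 0 -> Wlam c lam (wlam c lam).
Proof.
  intros Hl Hf. apply Wlam_intro; [|apply wlam_coord0|].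
  - split; [split|].
    + intros Hm. rewrite wlam_coord0, (eps_m0false Hm). ring.
    + intros i Hi. apply wlam_out, Hi.
    + rewrite Qst_wlam; auto.
  - intros i Hi. rewrite wlam_coord by auto. pose proof (inLamo_pos lam Hl i Hi). field. lra.
Qed.

Lemma Wlam_eq_wlam lam w : inLamo c lam -> Wlam c lam w -> w = wlam c lam.
Proof.
  intros Hl Hw. apply functional_extensionality. intros [|i].
  - apply (Wlam_coord0 lam w Hw).
  - destruct (le_lt_dec (S i) (nq c)).
    + assert (HR : inRange c (S i)) by (split; lia).
      rewrite wlam_coord by auto. pose proof (inLamo_pos lam Hl _ HR).
      rewrite <- (Wlam_coord lam w Hw _ HR). field. lra.
    + rewrite wlam_out by auto. destruct Hw as [[[_ Hs] _] _]. apply Hs; auto.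
Qed.

Lemma nonempty_Wlam_root lam : inLamo c lam -> fC c lam = 0 -> nonempty (Wlam c lam).
Proof. intros Hl Hf. exists (wlam c lam). apply wlam_Wlam; auto. Qed.

Lemma Lst_wlam lam : inLamo c lam -> Lst c (wlam c lam) =
  lam ^ 2 * (lC c 0 ^ 2 + sumR (fun i => lC c i ^ 2 / (1 - lam * gam c i) ^ 2) 1 (nq c)).
Proof.
  intros Hl. rewrite Lst_split, wlam_coord0, Rmult_plus_distr_l, <- sumR_scal.
  change (lC c 0) with (eps c). f_equal; [ring|].
  apply sumR_ext. intros i Hi. assert (HR : inRange c i) by (split; lia).
  rewrite wlam_coord by auto. pose proof (inLamo_pos lam Hl i HR).
  unfold lC. destruct i as [|i]; [lia|]. cbn [Nat.eqb]. rewrite sqr_abs_mul. field. lra.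
Qed.


Lemma gam_inj i j : inRange c i -> inRange c j -> i <> j -> gam c i <> gam c j.
Proof.
  intros [Hi1 Hi2] [Hj1 Hj2] Hij.
  assert (H : (i < j \/ j < i)%nat) by lia.
  destruct H as [H|H]; [pose proof (gam_decr i j Hi1 H Hj2) | pose proof (gam_decr j i Hj1 H Hi2)]; lra.
Qed.

Section Endpoint.
Variable j : nat.
Hypothesis Hj : inRange c j.

Lemma Wlam_endpoint_coord0 w : Wlam c (/ gam c j) w -> w 0%nat = eps c / gam c j.
Proof. intros Hw. rewrite (Wlam_coord0 _ _ Hw). unfold Rdiv. ring. Qed.

Lemma Wlam_endpoint_del w : Wlam c (/ gam c j) w -> del c j = 0.
Proof.
  intros Hw. rewrite <- (Wlam_coord _ _ Hw j Hj). pose proof (gam_neq0 j Hj). field_simplify; auto.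
Qed.

Lemma Wlam_endpoint_coord w i : Wlam c (/ gam c j) w -> inRange c i -> i <> j ->
  w i = del c i / (1 - gam c i / gam c j).
Proof.
  intros Hw Hi Hij. rewrite <- (Wlam_coord _ _ Hw i Hi).
  pose proof (gam_neq0 j Hj). pose proof (gam_inj i j Hi Hj Hij).
  field. split; auto. intro E. apply (gam_inj i j Hi Hj Hij). field_simplify in E; lra.
Qed.

End Endpoint.


Lemma v1_coord0 s : v1 c s 0%nat = yhat1 c.
Proof. reflexivity. Qed.

Lemma v1_coord1 s : v1 c s 1%nat = s * zeta1 c.
Proof. reflexivity. Qed.

Lemma v1_coord s i : (2 <= i <= nq c)%nat -> v1 c s i = zhat1 c i.
Proof.
  intros H. unfold v1. destruct i as [|[|i]]; try lia. cbn [Nat.eqb].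
  replace (S (S i) <=? nq c)%nat with true by (symmetry; apply Nat.leb_le; lia). reflexivity.
Qed.

Lemma v1_out s i : (nq c < i)%nat -> v1 c s i = 0.
Proof.
  intros H. pose proof nq_ge1. unfold v1. destruct i as [|[|i]]; try lia. cbn [Nat.eqb].
  replace (S (S i) <=? nq c)%nat with false by (symmetry; apply Nat.leb_gt; lia). reflexivity.
Qed.

Lemma Qst_split1 w : Qst c w =
  gam c 1 * w 1%nat ^ 2 + sumR (fun i => gam c i * w i ^ 2) 2 (nq c) + 2 * (eps c * w 0%nat) - kst c.
Proof. unfold Qst. rewrite sumR_first by apply nq_ge1. ring. Qed.

Lemma W1_coords w : W1 c w ->
  del c 1 = 0 /\ w 0%nat = yhat1 c /\ (forall i, (2 <= i <= nq c)%nat -> w i = zhat1 c i) /\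
  gam c 1 * w 1%nat ^ 2 + f1 c = 0.
Proof.
  intros Hw. pose proof (Wlam_endpoint_coord0 1 w Hw) as H0.
  assert (Hi : forall i, (2 <= i <= nq c)%nat -> w i = zhat1 c i).
  { intros i Hi. apply (Wlam_endpoint_coord 1 inRange_1); [exact Hw | split; lia | lia]. }
  split; [apply (Wlam_endpoint_del 1 inRange_1 w Hw) | split; [exact H0 | split; [exact Hi|]]].
  destruct Hw as [[_ Q] _]. rewrite Qst_split1, H0 in Q.
  rewrite (sumR_ext _ _ _ (fun i => gam c i * zhat1 c i ^ 2)) in Q by (intros i Hi'; rewrite Hi; auto).
  unfold f1, yhat1. lra.
Qed.

Lemma v1_W1 s : del c 1 = 0 -> 0 <= - f1 c / gam c 1 -> s ^ 2 = 1 -> W1 c (v1 c s).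
Proof.
  intros Hd Hf Hs. pose proof gam1_pos.
  apply Wlam_intro; [split; [split|] | rewrite v1_coord0; unfold yhat1, Rdiv; ring |].
  - intros Hm. rewrite v1_coord0. unfold yhat1. rewrite (eps_m0false Hm). unfold Rdiv; ring.
  - apply v1_out.
  - rewrite Qst_split1, (sumR_ext _ _ _ (fun i => gam c i * zhat1 c i ^ 2)), v1_coord1, v1_coord0
      by (intros; rewrite v1_coord; auto).
    unfold zeta1. rewrite Rpow_mult_distr, pow2_sqrt, Hs by exact Hf. unfold f1. field. lra.
  - intros i Hi. destruct (Nat.eq_dec i 1) as [->|Hi1].
    + rewrite Hd, v1_coord1. field. lra.
    + rewrite v1_coord by (destruct Hi; lia). unfold zhat1.
      pose proof (gam_lt_gam1 i Hi Hi1). field. split; lra.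
Qed.

Lemma W1_eq_v1_sign w s : W1 c w -> w 1%nat = s * zeta1 c -> w = v1 c s.
Proof.
  intros Hw Hw1. destruct (W1_coords w Hw) as [_ [H0 [Hi _]]].
  apply functional_extensionality. intros [|[|i]]; [exact H0 | exact Hw1 |].
  destruct (le_lt_dec (S (S i)) (nq c)).
  - rewrite v1_coord by lia. apply Hi. lia.
  - rewrite v1_out by auto. destruct Hw as [[[_ Hs] _] _]. apply Hs; auto.
Qed.

Lemma W1_eq_v1 : nonempty (W1 c) ->
  del c 1 = 0 /\ 0 <= - f1 c / gam c 1 /\
  set_eq (W1 c) (fun w => single (v1 c 1) w \/ single (v1 c (-1)) w).
Proof.
  intros [u Hu]. pose proof gam1_pos. destruct (W1_coords u Hu) as [Hd [_ [_ Hu1]]].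
  assert (Hf : 0 <= - f1 c / gam c 1).
  { replace (f1 c) with (- (gam c 1 * u 1%nat ^ 2)) by lra.
    replace (- - (gam c 1 * u 1%nat ^ 2) / gam c 1) with (u 1%nat ^ 2) by (field; lra).
    apply pow2_ge_0. }
  split; [exact Hd | split; [exact Hf|]]. intros w. split.
  - intros Hw. destruct (W1_coords w Hw) as [_ [H0 [Hi Hw1]]].
    assert (Hz : w 1%nat ^ 2 = zeta1 c ^ 2).
    { unfold zeta1. rewrite pow2_sqrt by exact Hf.
      replace (f1 c) with (- (gam c 1 * w 1%nat ^ 2)) by lra. field. lra. }
    assert (Hz0 : 0 <= zeta1 c) by apply sqrt_pos.
    destruct (sqr_eq_cases _ _ Hz0 Hz) as [E|E]; [left|right]; apply single_eq;
      apply W1_eq_v1_sign; auto; rewrite E; ring.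
  - intros [H1|H1]; apply single_eq in H1 as ->; apply v1_W1; auto; ring.
Qed.

Lemma Lst_v1 : del c 1 = 0 ->
  Lst c (v1 c 1) = / gam c 1 ^ 2 * (lC c 0 ^ 2 +
     sumR (fun i => lC c i ^ 2 / (1 - gam c i / gam c 1) ^ 2) 2 (nq c)) + zeta1 c ^ 2.
Proof.
  intros Hd. pose proof gam1_pos.
  rewrite Lst_split, sumR_first by apply nq_ge1. rewrite v1_coord0, v1_coord1, Hd.
  rewrite Rmult_plus_distr_l, <- sumR_scal.
  rewrite (sumR_ext _ _ (fun i => (v1 c 1 i - del c i) ^ 2)
     (fun i => / gam c 1 ^ 2 * (lC c i ^ 2 / (1 - gam c i / gam c 1) ^ 2))).
  - change (lC c 0) with (eps c). unfold yhat1. field. lra.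
  - intros i Hi. rewrite v1_coord by auto. assert (HR : inRange c i) by (split; lia).
    pose proof (gam_lt_gam1 i HR ltac:(lia)). unfold lC, zhat1. destruct i as [|i]; [lia|].
    cbn [Nat.eqb]. rewrite sqr_abs_mul. field. split; lra.
Qed.


Section NegativeGamq.
Hypothesis Hq : gam c (nq c) < 0.

Lemma vq_coord0 s : vq c s 0%nat = yhatq c.
Proof. reflexivity. Qed.

Lemma vq_coordq s : vq c s (nq c) = s * zetaq c.
Proof.
  pose proof (nq_ge2 Hq). unfold vq. replace (nq c =? 0)%nat with false by (symmetry; apply Nat.eqb_neq; lia).
  rewrite Nat.eqb_refl. reflexivity.
Qed.

Lemma vq_coord s i : (1 <= i <= nq c - 1)%nat -> vq c s i = zhatq c i.
Proof.
  intros H. unfold vq. destruct (Nat.eqb_spec i 0); [lia|].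
  destruct (Nat.eqb_spec i (nq c)); [lia|]. destruct (Nat.ltb_spec i (nq c)); [reflexivity|lia].
Qed.

Lemma vq_out s i : (nq c < i)%nat -> vq c s i = 0.
Proof.
  intros H. unfold vq. destruct (Nat.eqb_spec i 0); [lia|].
  destruct (Nat.eqb_spec i (nq c)); [lia|]. destruct (Nat.ltb_spec i (nq c)); [lia|reflexivity].
Qed.

Lemma Qst_splitq w : Qst c w = sumR (fun i => gam c i * w i ^ 2) 1 (nq c - 1)
  + gam c (nq c) * w (nq c) ^ 2 + 2 * (eps c * w 0%nat) - kst c.
Proof. unfold Qst. rewrite sumR_last by (pose proof (nq_ge2 Hq); lia). ring. Qed.

Lemma Wq_coords w : Wq c w ->
  del c (nq c) = 0 /\ w 0%nat = yhatq c /\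
  (forall i, (1 <= i <= nq c - 1)%nat -> w i = zhatq c i) /\
  gam c (nq c) * w (nq c) ^ 2 + fq c = 0.
Proof.
  intros Hw. pose proof (nq_ge2 Hq). pose proof (Wlam_endpoint_coord0 (nq c) w Hw) as H0.
  assert (Hi : forall i, (1 <= i <= nq c - 1)%nat -> w i = zhatq c i).
  { intros i Hi. apply (Wlam_endpoint_coord (nq c) inRange_nq); [exact Hw | split; lia | lia]. }
  split; [apply (Wlam_endpoint_del (nq c) inRange_nq w Hw) | split; [exact H0 | split; [exact Hi|]]].
  destruct Hw as [[_ Q] _]. rewrite Qst_splitq, H0 in Q.
  rewrite (sumR_ext _ _ _ (fun i => gam c i * zhatq c i ^ 2)) in Q by (intros i Hi'; rewrite Hi; auto).
  unfold fq, yhatq. lra.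
Qed.

Lemma vq_Wq s : del c (nq c) = 0 -> 0 <= fq c / - gam c (nq c) -> s ^ 2 = 1 -> Wq c (vq c s).
Proof.
  intros Hd Hf Hs. pose proof (nq_ge2 Hq).
  apply Wlam_intro; [split; [split|] | rewrite vq_coord0; unfold yhatq, Rdiv; ring |].
  - intros Hm. rewrite vq_coord0. unfold yhatq. rewrite (eps_m0false Hm). unfold Rdiv; ring.
  - apply vq_out.
  - rewrite Qst_splitq, (sumR_ext _ _ _ (fun i => gam c i * zhatq c i ^ 2)), vq_coordq, vq_coord0
      by (intros; rewrite vq_coord; auto).
    unfold zetaq. rewrite Rpow_mult_distr, pow2_sqrt, Hs by exact Hf. unfold fq. field. lra.
  - intros i Hi. destruct (Nat.eq_dec i (nq c)) as [->|Hiq].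
    + rewrite Hd, vq_coordq. field. lra.
    + rewrite vq_coord by (destruct Hi; lia). unfold zhatq.
      pose proof (gamq_lt_gam i Hi Hiq). field. split; lra.
Qed.

Lemma Wq_eq_vq_sign w s : Wq c w -> w (nq c) = s * zetaq c -> w = vq c s.
Proof.
  intros Hw Hwq. destruct (Wq_coords w Hw) as [_ [H0 [Hi _]]].
  apply functional_extensionality. intros i.
  destruct (Nat.eq_dec i 0) as [->|]; [exact H0|].
  destruct (Nat.eq_dec i (nq c)) as [->|]; [rewrite vq_coordq; exact Hwq|].
  destruct (le_lt_dec i (nq c)).
  - rewrite vq_coord by lia. apply Hi. lia.
  - rewrite vq_out by auto. destruct Hw as [[[_ Hs] _] _]. apply Hs; auto.
Qed.

Lemma Wq_eq_vq : nonempty (Wq c) ->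
  del c (nq c) = 0 /\ 0 <= fq c / - gam c (nq c) /\
  set_eq (Wq c) (fun w => single (vq c 1) w \/ single (vq c (-1)) w).
Proof.
  intros [u Hu]. destruct (Wq_coords u Hu) as [Hd [_ [_ Huq]]].
  assert (Hf : 0 <= fq c / - gam c (nq c)).
  { replace (fq c) with (- (gam c (nq c) * u (nq c) ^ 2)) by lra.
    replace (- (gam c (nq c) * u (nq c) ^ 2) / - gam c (nq c)) with (u (nq c) ^ 2) by (field; lra).
    apply pow2_ge_0. }
  split; [exact Hd | split; [exact Hf|]]. intros w. split.
  - intros Hw. destruct (Wq_coords w Hw) as [_ [_ [_ Hwq]]].
    assert (Hz : w (nq c) ^ 2 = zetaq c ^ 2).
    { unfold zetaq. rewrite pow2_sqrt by exact Hf.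
      replace (fq c) with (- (gam c (nq c) * w (nq c) ^ 2)) by lra. field. lra. }
    assert (Hz0 : 0 <= zetaq c) by apply sqrt_pos.
    destruct (sqr_eq_cases _ _ Hz0 Hz) as [E|E]; [left|right]; apply single_eq;
      apply Wq_eq_vq_sign; auto; rewrite E; ring.
  - intros [H1|H1]; apply single_eq in H1 as ->; apply vq_Wq; auto; ring.
Qed.

Lemma Lst_vq : del c (nq c) = 0 ->
  Lst c (vq c 1) = / gam c (nq c) ^ 2 * (lC c 0 ^ 2 +
     sumR (fun i => lC c i ^ 2 / (1 - gam c i / gam c (nq c)) ^ 2) 1 (nq c - 1)) + zetaq c ^ 2.
Proof.
  intros Hd. pose proof (nq_ge2 Hq).
  rewrite Lst_split, sumR_last by lia. rewrite vq_coord0, vq_coordq, Hd.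
  rewrite Rmult_plus_distr_l, <- sumR_scal.
  rewrite (sumR_ext _ _ (fun i => (vq c 1 i - del c i) ^ 2)
     (fun i => / gam c (nq c) ^ 2 * (lC c i ^ 2 / (1 - gam c i / gam c (nq c)) ^ 2))).
  - change (lC c 0) with (eps c). unfold yhatq. field. lra.
  - intros i Hi. rewrite vq_coord by auto. assert (HR : inRange c i) by (split; lia).
    pose proof (gamq_lt_gam i HR ltac:(lia)). unfold lC, zhatq. destruct i as [|i]; [lia|].
    cbn [Nat.eqb]. rewrite sqr_abs_mul. field. split; lra.
Qed.

End NegativeGamq.


(** * Sign analysis of [f] *)

Lemma fC_continuous lam : inLamo c lam -> continuity_pt (fC c) lam.
Proof.
  intros Hl. apply continuity_pt_affine_shift.
  apply (continuity_pt_sumR (fun i y => gam c i * del c i ^ 2 / (1 - y * gam c i) ^ 2)).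
  intros i Hi. apply continuity_pt_inv_sqr.
  pose proof (inLamo_pos lam Hl i ltac:(split; lia)). lra.
Qed.

Lemma fC_root l1 l2 : inLamo c l1 -> inLamo c l2 -> fC c l1 < 0 -> 0 < fC c l2 ->
  exists lam, inLamo c lam /\ fC c lam = 0.
Proof.
  intros H1 H2 F1 F2.
  assert (Hmin : inLamo c (Rmin l1 l2)) by (unfold Rmin; destruct Rle_dec; auto).
  assert (Hmax : inLamo c (Rmax l1 l2)) by (unfold Rmax; destruct Rle_dec; auto).
  destruct (IVT_opposite_signs (fC c) l1 l2) as [z [Hz Hfz]]; auto.
  - intros x Hx. apply fC_continuous, (inLamo_between _ _ x Hmin Hmax Hx).
  - exists z. split; [apply (inLamo_between _ _ z Hmin Hmax Hz) | exact Hfz].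
Qed.

(* Here the admissible region is unbounded below and [f(-T) <= sum_i del_i^2 / T - 2 eps^2 T - k*];
   this is eventually negative because [eps > 0] or [k* > 0] ([eps = k* = 0] would make the
   problem non- or multiply-Lagrangian). *)
Lemma fC_neg_somewhere : singLag c -> 0 < gam c (nq c) -> exists lam, inLamo c lam /\ fC c lam < 0.
Proof.
  intros [HnL HmL] Hq. set (D := sumR (fun i => del c i ^ 2) 1 (nq c)).
  assert (HD : 0 <= D) by (apply sumR_nonneg; intros; apply pow2_ge_0).
  assert (Hbound : forall T, 0 < T -> fC c (- T) <= D / T - 2 * eps c ^ 2 * T - kst c).
  { intros T HT. unfold fC. enough (sumR (fun i => gam c i * del c i ^ 2 / (1 - - T * gam c i) ^ 2) 1 (nq c)
      <= D / T) by lra.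
    replace (D / T) with (/ T * D) by (unfold Rdiv; ring).
    unfold D. rewrite <- sumR_scal. apply sumR_le. intros i Hi.
    pose proof (gamq_le_gam i ltac:(split; lia)). pose proof (pow2_ge_0 (del c i)).
    assert (Hx : 0 < 1 + T * gam c i) by nra.
    apply (Rmult_le_reg_r (T * (1 + T * gam c i) ^ 2)); [apply Rmult_lt_0_compat; nra|].
    replace (gam c i * del c i ^ 2 / (1 - - T * gam c i) ^ 2 * (T * (1 + T * gam c i) ^ 2))
      with (T * gam c i * del c i ^ 2) by (field; lra).
    replace (/ T * del c i ^ 2 * (T * (1 + T * gam c i) ^ 2)) with (del c i ^ 2 * (1 + T * gam c i) ^ 2)
      by (field; lra).
    assert (0 <= del c i ^ 2 * ((1 + T * gam c i) ^ 2 - T * gam c i)) by (apply Rmult_le_pos; nra).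
    lra. }
  assert (Hek : 0 < eps c \/ 0 < kst c).
  { destruct (Rle_lt_or_eq_dec _ _ eps_ge0) as [|He]; [left; auto | right].
    assert (Hm : m0pos c = false).
    { destruct (m0pos c) eqn:E; auto. pose proof (eps_m0true E). lra. }
    destruct inW_nonempty as [w [_ Qw]]. unfold Qst in Qw. rewrite <- He in Qw.
    assert (0 <= sumR (fun i => gam c i * w i ^ 2) 1 (nq c)).
    { apply sumR_nonneg. intros i Hi. pose proof (gamq_le_gam i ltac:(split; lia)).
      apply Rmult_le_pos; [lra | apply pow2_ge_0]. }
    destruct (Rle_lt_or_eq_dec 0 (kst c)) as [|Hk]; [lra | auto | exfalso].
    destruct (classic (exists i, inRange c i /\ del c i <> 0)) as [Hex|Hnex].
    - apply HnL. repeat split; auto.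
    - apply HmL. repeat split; auto. intros i Hi. apply NNPP. intro. apply Hnex. eauto. }
  destruct (exists_div_lt_affine D (2 * eps c ^ 2) (kst c) HD ltac:(nra)) as [T [HT HDT]].
  { destruct Hek; [left; nra | right; auto]. }
  exists (- T). split; [split; intros; [pose proof (Rinv_0_lt_compat _ gam1_pos); lra | lra]|].
  pose proof (Hbound T HT). lra.
Qed.


(* [f] without its pole at [lam = / gam_j]. *)
Definition frest (j : nat) (lam : R) : R :=
  sumR (fun i => if (i =? j)%nat then 0 else gam c i * del c i ^ 2 / (1 - lam * gam c i) ^ 2) 1 (nq c)
  + 2 * eps c ^ 2 * lam - kst c.

Section EndpointLimit.
Variable j : nat.
Hypothesis Hj : inRange c j.

Lemma fC_pick lam : fC c lam = gam c j * del c j ^ 2 / (1 - lam * gam c j) ^ 2 + frest j lam.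
Proof. unfold fC, frest. rewrite (sumR_pick 1 (nq c) _ j Hj). ring. Qed.

Lemma frest_continuous : continuity_pt (frest j) (/ gam c j).
Proof.
  apply continuity_pt_affine_shift.
  apply (continuity_pt_sumR (fun i y => if (i =? j)%nat then 0 else
    gam c i * del c i ^ 2 / (1 - y * gam c i) ^ 2)).
  intros i Hi. destruct (Nat.eqb_spec i j) as [->|Hij].
  - apply continuity_pt_cst.
  - apply continuity_pt_inv_sqr. intro E. apply (gam_inj i j ltac:(split; lia) Hj Hij).
    pose proof (gam_neq0 j Hj). apply (Rmult_eq_reg_l (/ gam c j)); [|apply Rinv_neq_0_compat; auto].
    rewrite Rinv_l by auto. lra.
Qed.

(* Near the endpoint [lam = (1 - t) / gam_j] the pole contributes [(gam_j del_j)^2 / t^2] to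
   [gam_j f], so a sign condition on [gam_j f] can only hold if the pole is absent. *)
Lemma endpoint_limit : (forall t, 0 < t < 1 -> gam c j * fC c ((1 - t) / gam c j) <= 0) ->
  del c j = 0 /\ gam c j * frest j (/ gam c j) <= 0.
Proof.
  intros Hf. pose proof (gam_neq0 j Hj) as Hg. set (G := fun t => gam c j * frest j ((1 - t) / gam c j)).
  assert (HG : continuity_pt G 0).
  { assert (Hin : continuity_pt (fun t => (1 - t) / gam c j) 0) by reg.
    assert (Hr : continuity_pt (frest j) ((1 - 0) / gam c j)).
    { replace ((1 - 0) / gam c j) with (/ gam c j) by (field; auto). apply frest_continuous. }
    exact (continuity_pt_mult (fun _ => gam c j) _ 0 (continuity_pt_cst _ 0)
      (continuity_pt_comp _ (frest j) 0 Hin Hr)). }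
  assert (HG0 : G 0 = gam c j * frest j (/ gam c j)) by (unfold G; do 3 f_equal; field; auto).
  assert (Hft : forall t, 0 < t < 1 ->
    gam c j * fC c ((1 - t) / gam c j) = (gam c j * del c j) ^ 2 / t ^ 2 + G t).
  { intros t Ht. rewrite fC_pick. unfold G.
    replace (1 - (1 - t) / gam c j * gam c j) with t by (field; auto). field. lra. }
  assert (Hdel : (gam c j * del c j) ^ 2 <= 0).
  { replace ((gam c j * del c j) ^ 2) with ((gam c j * del c j) ^ 2 + 0 ^ 2 * G 0) by ring.
    apply (continuity_pt_nonpos_right (fun t => (gam c j * del c j) ^ 2 + t ^ 2 * G t) 1); [lra| |].
    - assert (Hsq : continuity_pt (fun t => t ^ 2) 0) by reg.
      exact (continuity_pt_plus (fun _ => (gam c j * del c j) ^ 2) _ 0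
        (continuity_pt_cst _ 0) (continuity_pt_mult _ G 0 Hsq HG)).
    - intros t Ht. specialize (Hf t Ht). rewrite Hft in Hf by auto.
      replace ((gam c j * del c j) ^ 2 + t ^ 2 * G t)
        with (t ^ 2 * ((gam c j * del c j) ^ 2 / t ^ 2 + G t)) by (field; lra).
      pose proof (pow2_ge_0 t). nra. }
  assert (Hd : del c j = 0).
  { assert (Hz : gam c j * del c j = 0) by nra.
    destruct (Rmult_integral _ _ Hz); [contradiction | auto]. }
  split; [exact Hd|]. rewrite <- HG0. apply (continuity_pt_nonpos_right G 1); [lra | exact HG |].
  intros t Ht. specialize (Hf t Ht). rewrite Hft, Hd in Hf by auto. unfold Rdiv in Hf.
  rewrite Rmult_0_r, pow_i, Rmult_0_l, Rplus_0_l in Hf by lia. exact Hf.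
Qed.

End EndpointLimit.

Lemma frest1_eq_f1 : frest 1 (/ gam c 1) = f1 c.
Proof.
  pose proof gam1_pos. unfold frest, f1, yhat1. rewrite sumR_first by apply nq_ge1.
  rewrite (sumR_ext _ _ _ (fun i => gam c i * zhat1 c i ^ 2)); [simpl; field; lra|].
  intros i Hi. replace (i =? 1)%nat with false by (symmetry; apply Nat.eqb_neq; lia).
  pose proof (gam_lt_gam1 i ltac:(split; lia) ltac:(lia)). unfold zhat1. field. split; lra.
Qed.

Lemma W1_nonempty : (forall lam, inLamo c lam -> fC c lam <= 0) -> nonempty (W1 c).
Proof.
  intros Hf. pose proof gam1_pos. pose proof (Rinv_0_lt_compat _ H).
  destruct (endpoint_limit 1 inRange_1) as [Hd Hr].
  - intros t Ht. enough (fC c ((1 - t) / gam c 1) <= 0) by nra. apply Hf.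
    split; intros Hq.
    + apply (Rmult_lt_reg_l (gam c 1)); [lra|]. field_simplify; lra.
    + pose proof (Rinv_lt_0_compat _ Hq). split; [|apply (Rmult_lt_reg_l (gam c 1)); [lra|]; field_simplify; lra].
      enough (0 <= (1 - t) / gam c 1) by lra. apply Rdiv_le_0_compat; lra.
  - rewrite frest1_eq_f1 in Hr. exists (v1 c 1). apply v1_W1; [exact Hd | | ring].
    replace (- f1 c / gam c 1) with (- (gam c 1 * f1 c) / gam c 1 ^ 2) by (field; lra).
    apply Rdiv_le_0_compat; [lra | apply pow_lt; lra].
Qed.

Section NegativeGamqLimit.
Hypothesis Hq : gam c (nq c) < 0.

Lemma frestq_eq_fq : frest (nq c) (/ gam c (nq c)) = fq c.
Proof.
  pose proof (nq_ge2 Hq). unfold frest, fq, yhatq. rewrite sumR_last by lia. rewrite Nat.eqb_refl.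
  rewrite (sumR_ext _ _ _ (fun i => gam c i * zhatq c i ^ 2)); [field; lra|].
  intros i Hi. replace (i =? nq c)%nat with false by (symmetry; apply Nat.eqb_neq; lia).
  pose proof (gamq_lt_gam i ltac:(split; lia) ltac:(lia)). unfold zhatq. field. split; lra.
Qed.

Lemma Wq_nonempty : (forall lam, inLamo c lam -> 0 <= fC c lam) -> nonempty (Wq c).
Proof.
  intros Hf. pose proof (Rinv_lt_0_compat _ Hq). pose proof (Rinv_0_lt_compat _ gam1_pos).
  destruct (endpoint_limit (nq c) inRange_nq) as [Hd Hr].
  - intros t Ht. enough (0 <= fC c ((1 - t) / gam c (nq c))) by nra. apply Hf.
    assert ((1 - t) / gam c (nq c) <= 0) by (unfold Rdiv; nra).
    split; intros; [lra | split; [|lra]].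
    assert (0 < t * - / gam c (nq c)) by (apply Rmult_lt_0_compat; lra). unfold Rdiv. lra.
  - rewrite frestq_eq_fq in Hr. exists (vq c 1). apply vq_Wq; [exact Hq | exact Hd | | ring].
    replace (fq c / - gam c (nq c)) with (- (gam c (nq c) * fq c) / gam c (nq c) ^ 2) by (field; lra).
    apply Rdiv_le_0_compat; [lra | nra].
Qed.

End NegativeGamqLimit.


Lemma What_eq_Wcirc_of_sign_change l1 l2 : inLamo c l1 -> inLamo c l2 -> fC c l1 < 0 -> 0 < fC c l2 ->
  set_eq (What c) (Wcirc c).
Proof.
  intros H1 H2 F1 F2. destruct (fC_root l1 l2 H1 H2 F1 F2) as [lam [Hl Hf]].
  apply (What_eq_Wcirc lam Hl), nonempty_Wlam_root; auto.
Qed.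

Lemma What_eq_W1_of_fC_nonpos : (forall lam, inLamo c lam -> fC c lam <= 0) -> set_eq (What c) (W1 c).
Proof. intros Hf. apply What_eq_Wlam; [apply admissible_gam1 | apply W1_nonempty, Hf]. Qed.

Lemma What_eq_Wq_of_fC_nonneg : gam c (nq c) < 0 ->
  (forall lam, inLamo c lam -> 0 <= fC c lam) -> set_eq (What c) (Wq c).
Proof. intros Hq Hf. apply What_eq_Wlam; [apply admissible_gamq, Hq | apply Wq_nonempty; auto]. Qed.

Lemma singLag_stationary : singLag c ->
  (exists lam, inLamo c lam /\ fC c lam = 0) \/ nonempty (W1 c) \/ (gam c (nq c) < 0 /\ nonempty (Wq c)).
Proof.
  intros HS. destruct (classic (forall lam, inLamo c lam -> fC c lam <= 0)) as [Hle|Hnle].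
  { right; left. apply W1_nonempty, Hle. }
  destruct (not_all_ex_not _ _ Hnle) as [l2 Hl2]. apply imply_to_and in Hl2 as [Hl2 Hf2].
  destruct (classic (exists l1, inLamo c l1 /\ fC c l1 < 0)) as [[l1 [Hl1 Hf1]]|Hnn].
  { left. apply (fC_root l1 l2); auto. lra. }
  assert (Hge : forall lam, inLamo c lam -> 0 <= fC c lam).
  { intros lam Hl. apply Rnot_lt_le. intro. apply Hnn. eauto. }
  destruct gamq_sign as [Hq|Hq].
  - exfalso. destruct (fC_neg_somewhere HS Hq) as [l [Hl Hf]]. apply Hnn. eauto.
  - right; right. split; [exact Hq | apply Wq_nonempty; auto].
Qed.

Lemma What_nonempty : singLag c -> nonempty (What c).
Proof.
  intros HS. destruct (singLag_stationary HS) as [[lam [Hl Hf]]|[[w Hw]|[Hq [w Hw]]]].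
  - exists (wlam c lam). apply (Wlam_What lam); [apply admissible_inLamo | apply wlam_Wlam]; auto.
  - exists w. apply (Wlam_What _ w admissible_gam1 Hw).
  - exists w. apply (Wlam_What _ w (admissible_gamq Hq) Hw).
Qed.

Lemma Wcirc_case lam : singLag c -> inLamo c lam -> fC c lam = 0 ->
  nonempty (Wcirc c) /\ set_eq (What c) (Wcirc c) /\ emptyS (W1 c) /\
  (gam c (nq c) < 0 -> emptyS (Wq c)).
Proof.
  intros HS Hl Hf. pose proof (nonempty_Wlam_root lam Hl Hf) as Hne.
  pose proof (admissible_inLamo lam Hl) as Ha.
  split; [|split; [|split]].
  - destruct Hne as [w Hw]. exists w, lam. auto.
  - apply (What_eq_Wcirc lam); auto.
  - apply (Wlam_exclusive lam); auto; [apply admissible_gam1 | apply inLamo_neq_gam1, Hl].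
  - intros Hq. apply (Wlam_exclusive lam); auto; [apply admissible_gamq, Hq | apply inLamo_neq_gamq, Hl].
Qed.

Lemma W1_case : singLag c -> nonempty (W1 c) ->
  emptyS (Wcirc c) /\ nonempty (W1 c) /\ set_eq (What c) (W1 c) /\ (gam c (nq c) < 0 -> emptyS (Wq c)).
Proof.
  intros HS Hne. pose proof admissible_gam1 as Ha. split; [|split; [|split]]; auto.
  - apply (Wcirc_empty (/ gam c 1)); auto. intros lam Hl. apply inLamo_neq_gam1, Hl.
  - apply What_eq_Wlam; auto.
  - intros Hq. apply (Wlam_exclusive (/ gam c 1)); auto; [apply admissible_gamq, Hq | apply gam1_neq_gamq, Hq].
Qed.

Lemma Wq_case : singLag c -> gam c (nq c) < 0 -> nonempty (Wq c) ->
  gam c (nq c) < 0 /\ emptyS (Wcirc c) /\ emptyS (W1 c) /\ nonempty (Wq c) /\ set_eq (What c) (Wq c).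
Proof.
  intros HS Hq Hne. pose proof (admissible_gamq Hq) as Ha. split; [|split; [|split; [|split]]]; auto.
  - apply (Wcirc_empty (/ gam c (nq c))); auto. intros lam Hl. apply inLamo_neq_gamq, Hl.
  - apply (Wlam_exclusive (/ gam c (nq c))); auto; [apply admissible_gam1|].
    intros E. apply (gam1_neq_gamq Hq). auto.
  - apply What_eq_Wlam; auto.
Qed.

Lemma Wcirc_solution : singLag c -> set_eq (What c) (Wcirc c) ->
  (exists! lam, inLamo c lam /\ fC c lam = 0) /\
  (forall lam, inLamo c lam -> fC c lam = 0 ->
     infL c (lam ^ 2 * (lC c 0 ^ 2 + sumR (fun i => lC c i ^ 2 / (1 - lam * gam c i) ^ 2) 1 (nq c))) /\
     set_eq (What c) (single (wlam c lam))).
Proof.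
  intros HS HW.
  assert (Hroot : forall lam, inLamo c lam -> fC c lam = 0 -> set_eq (What c) (single (wlam c lam))).
  { intros lam Hl Hf w. rewrite single_eq,
      (What_eq_Wlam lam (admissible_inLamo lam Hl) (nonempty_Wlam_root lam Hl Hf) w).
    split; [apply Wlam_eq_wlam, Hl | intros ->; apply wlam_Wlam; auto]. }
  split.
  - destruct (What_nonempty HS) as [w Hw]. apply HW in Hw as [lam [Hl Hw]].
    assert (Hf : fC c lam = 0).
    { rewrite <- (Qst_wlam lam Hl), <- (Wlam_eq_wlam lam w Hl Hw). apply Hw. }
    exists lam. split; [auto|]. intros l2 [Hl2 Hf2].
    destruct (Req_dec lam l2) as [|Hne]; [auto | exfalso].
    apply (Wlam_exclusive lam l2 HS (admissible_inLamo lam Hl) (admissible_inLamo l2 Hl2) Hne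
      (nonempty_Wlam_root lam Hl Hf) (wlam c l2)), wlam_Wlam; auto.
  - intros lam Hl Hf. split; [|auto].
    rewrite <- (Lst_wlam lam Hl). apply What_infL.
    apply (Wlam_What lam); [apply admissible_inLamo | apply wlam_Wlam]; auto.
Qed.

Lemma W1_solution : singLag c -> set_eq (What c) (W1 c) ->
  0 <= - f1 c / gam c 1 /\
  infL c (/ gam c 1 ^ 2 * (lC c 0 ^ 2 +
       sumR (fun i => lC c i ^ 2 / (1 - gam c i / gam c 1) ^ 2) 2 (nq c)) + zeta1 c ^ 2) /\
  set_eq (What c) (fun w => single (v1 c 1) w \/ single (v1 c (-1)) w).
Proof.
  intros HS HW. destruct (What_nonempty HS) as [w Hw]. apply HW in Hw.
  destruct (W1_eq_v1 (ex_intro _ w Hw)) as [Hd [Hf Hc]].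
  split; [exact Hf | split].
  - rewrite <- (Lst_v1 Hd). apply What_infL, HW, v1_W1; auto. ring.
  - intros u. split; intros H; [apply Hc, HW, H | apply HW, Hc, H].
Qed.

Lemma Wq_solution : singLag c -> gam c (nq c) < 0 -> set_eq (What c) (Wq c) ->
  0 <= fq c / - gam c (nq c) /\
  infL c (/ gam c (nq c) ^ 2 * (lC c 0 ^ 2 +
       sumR (fun i => lC c i ^ 2 / (1 - gam c i / gam c (nq c)) ^ 2) 1 (nq c - 1)) + zetaq c ^ 2) /\
  set_eq (What c) (fun w => single (vq c 1) w \/ single (vq c (-1)) w).
Proof.
  intros HS Hq HW. destruct (What_nonempty HS) as [w Hw]. apply HW in Hw.
  destruct (Wq_eq_vq Hq (ex_intro _ w Hw)) as [Hd [Hf Hc]].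
  split; [exact Hf | split].
  - rewrite <- (Lst_vq Hq Hd). apply What_infL, HW, vq_Wq; auto. ring.
  - intros u. split; intros H; [apply Hc, HW, H | apply HW, Hc, H].
Qed.


Lemma zerov_inW : kst c = 0 -> inW c zerov.
Proof.
  intros Hk. split; [split; intros; reflexivity|]. unfold Qst, zerov. rewrite Hk.
  rewrite (sumR_ext _ _ _ (fun _ => 0)) by (intros; ring). rewrite sumR_const0. ring.
Qed.

Lemma Lst_zerov : Lst c zerov = sumR (fun i => del c i ^ 2) 1 (nq c).
Proof. rewrite Lst_split. unfold zerov. rewrite (sumR_ext _ _ _ (fun i => del c i ^ 2)) by (intros; ring). ring. Qed.

Lemma nonLag_inW_zerov : nonLag c -> forall w, inW c w -> w = zerov.
Proof.
  intros [Hm [Hk [_ Hq]]] w [[Hw0 Hout] Q]. unfold Qst in Q. rewrite (eps_m0false Hm), Hk in Q.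
  assert (Hnn : forall i, (1 <= i <= nq c)%nat -> 0 <= gam c i * w i ^ 2).
  { intros i Hi. pose proof (gamq_le_gam i ltac:(split; lia)).
    apply Rmult_le_pos; [lra | apply pow2_ge_0]. }
  pose proof (sumR_nonneg_eq0 _ _ _ Hnn ltac:(lra)) as Z.
  apply functional_extensionality. intros [|i]; [apply Hw0, Hm|]. unfold zerov.
  destruct (le_lt_dec (S i) (nq c)); [|apply Hout; auto].
  specialize (Z (S i) ltac:(lia)). pose proof (gamq_le_gam (S i) ltac:(split; lia)).
  destruct (Rmult_integral _ _ Z) as [|Z2]; [lra | nra].
Qed.

Lemma nonLag_solution : nonLag c ->
  emptyS (Wcirc c) /\ emptyS (W1 c) /\ set_eq (inW c) (single zerov) /\
  infL c (sumR (fun i => / gam c i ^ 2 * lC c i ^ 2) 1 (nq c)) /\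
  0 < sumR (fun i => / gam c i ^ 2 * lC c i ^ 2) 1 (nq c) /\
  set_eq (What c) (single zerov).
Proof.
  intros HnL. pose proof (nonLag_inW_zerov HnL) as HW.
  destruct HnL as [Hm [Hk [[j [Hj Hdj]] Hq]]].
  assert (Hgp : forall i, (1 <= i <= nq c)%nat -> 0 < gam c i).
  { intros i Hi. pose proof (gamq_le_gam i Hi). lra. }
  assert (Hempty : forall lam, emptyS (Wlam c lam)).
  { intros lam w Hw. apply Hdj. rewrite <- (Wlam_coord lam w Hw j Hj), (HW w (proj1 Hw)). unfold zerov. ring. }
  assert (HWhat : set_eq (What c) (single zerov)).
  { intros w. rewrite single_eq. split; [intros [Hw _]; apply HW, Hw|].
    intros ->. split; [apply zerov_inW, Hk|]. intros v Hv. rewrite (HW v Hv). lra. }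
  assert (Hl : sumR (fun i => / gam c i ^ 2 * lC c i ^ 2) 1 (nq c) = sumR (fun i => del c i ^ 2) 1 (nq c)).
  { apply sumR_ext. intros i Hi. specialize (Hgp i Hi). unfold lC. destruct i as [|i]; [lia|].
    cbn [Nat.eqb]. rewrite sqr_abs_mul. field. lra. }
  rewrite Hl. split; [|split; [|split; [|split; [|split]]]].
  - intros w [lam [_ Hw]]. apply (Hempty lam w Hw).
  - apply Hempty.
  - intros w. rewrite single_eq. split; [apply HW | intros ->; apply zerov_inW, Hk].
  - rewrite <- Lst_zerov. apply What_infL, HWhat. intros i. reflexivity.
  - apply (sumR_pos _ _ _ j); [intros; apply pow2_ge_0 | apply Hj |].
    pose proof (del_ge0 j Hj). apply pow_lt. lra.
  - exact HWhat.
Qed.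

Lemma multLag_solution : multLag c ->
  infL c 0 /\ set_eq (What c) (single zerov) /\
  set_eq (Wcirc c) (single zerov) /\ set_eq (W1 c) (single zerov) /\
  (gam c (nq c) < 0 -> set_eq (Wq c) (single zerov)).
Proof.
  intros [Hm [Hk Hd]].
  assert (HZ : forall lam, Wlam c lam zerov).
  { intros lam. apply Wlam_intro; [apply zerov_inW, Hk | unfold zerov; rewrite (eps_m0false Hm); ring |].
    intros i Hi. unfold zerov. rewrite Hd by auto. ring. }
  assert (HWhat : set_eq (What c) (single zerov)).
  { intros w. rewrite single_eq. pose proof (admissible_inLamo 0 inLamo_0) as Ha. split.
    - intros Hw. rewrite (Wlam_eq_wlam 0 w inLamo_0 (What_Wlam 0 zerov w Ha (HZ 0) Hw)).
      apply functional_extensionality. intros [|i]; unfold zerov; [rewrite wlam_coord0; ring|].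
      destruct (le_lt_dec (S i) (nq c)); [|apply wlam_out; auto].
      rewrite wlam_coord, Hd by (split; lia). unfold Rdiv. ring.
    - intros ->. apply (Wlam_What 0); auto. }
  assert (Hset : forall lam, admissible lam -> set_eq (Wlam c lam) (single zerov)).
  { intros lam Ha w. split; [intros Hw; apply HWhat, (Wlam_What lam); auto|].
    intros ->%single_eq. apply HZ. }
  split; [|split; [exact HWhat | split; [|split]]].
  - replace 0 with (Lst c zerov).
    + apply What_infL, HWhat. intros i. reflexivity.
    + rewrite Lst_zerov, (sumR_ext _ _ _ (fun _ => 0)), sumR_const0; [reflexivity|].
      intros i Hi. rewrite Hd by (split; lia). ring.
  - intros w. split.
    + intros [lam [Hl Hw]]. apply (Hset lam (admissible_inLamo lam Hl)), Hw.
    + intros Hs. exists 0. split; [apply inLamo_0|]. apply (Hset 0 (admissible_inLamo 0 inLamo_0)), Hs.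
  - apply Hset, admissible_gam1.
  - intros Hq. apply Hset, admissible_gamq, Hq.
Qed.

End CanonicalForm.

Theorem theorem8p1 (c : CF) (Hreg : regular c) :
  (nonLag c ->
     emptyS (Wcirc c) /\ emptyS (W1 c) /\ set_eq (inW c) (single zerov) /\
     infL c (sumR (fun i => / (gam c i) ^ 2 * (lC c i) ^ 2) 1 (nq c)) /\
     0 < sumR (fun i => / (gam c i) ^ 2 * (lC c i) ^ 2) 1 (nq c) /\
     set_eq (What c) (single zerov))
  /\
  (multLag c ->
     infL c 0 /\ set_eq (What c) (single zerov) /\
     set_eq (Wcirc c) (single zerov) /\ set_eq (W1 c) (single zerov) /\
     (gam c (nq c) < 0 -> set_eq (Wq c) (single zerov)))
  /\
  (singLag c ->
     ((nonempty (Wcirc c) /\ set_eq (What c) (Wcirc c) /\ emptyS (W1 c) /\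
         (gam c (nq c) < 0 -> emptyS (Wq c))) \/
      (emptyS (Wcirc c) /\ nonempty (W1 c) /\ set_eq (What c) (W1 c) /\
         (gam c (nq c) < 0 -> emptyS (Wq c))) \/
      (gam c (nq c) < 0 /\ emptyS (Wcirc c) /\ emptyS (W1 c) /\
         nonempty (Wq c) /\ set_eq (What c) (Wq c))) /\
     (0 < gam c (nq c) ->
        (exists lam, inLamo c lam /\ fC c lam < 0) /\
        ((exists lam, inLamo c lam /\ 0 < fC c lam) -> set_eq (What c) (Wcirc c)) /\
        ((forall lam, inLamo c lam -> fC c lam <= 0) -> set_eq (What c) (W1 c))) /\
     (gam c (nq c) < 0 ->
        ((exists lam, inLamo c lam /\ fC c lam < 0) /\
         (exists lam, inLamo c lam /\ 0 < fC c lam) -> set_eq (What c) (Wcirc c)) /\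
        ((forall lam, inLamo c lam -> fC c lam <= 0) -> set_eq (What c) (W1 c)) /\
        ((forall lam, inLamo c lam -> 0 <= fC c lam) -> set_eq (What c) (Wq c))) /\
     (set_eq (What c) (Wcirc c) ->
        (exists! lam, inLamo c lam /\ fC c lam = 0) /\
        (forall lam, inLamo c lam -> fC c lam = 0 ->
           infL c (lam ^ 2 * ((lC c 0) ^ 2 +
             sumR (fun i => (lC c i) ^ 2 / (1 - lam * gam c i) ^ 2) 1 (nq c))) /\
           set_eq (What c) (single (wlam c lam)))) /\
     (set_eq (What c) (W1 c) ->
        0 <= - f1 c / gam c 1 /\
        infL c (/ (gam c 1) ^ 2 * ((lC c 0) ^ 2 +
             sumR (fun i => (lC c i) ^ 2 / (1 - gam c i / gam c 1) ^ 2) 2 (nq c))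
           + (zeta1 c) ^ 2) /\
        set_eq (What c) (fun w => single (v1 c 1) w \/ single (v1 c (-1)) w)) /\
     (gam c (nq c) < 0 -> set_eq (What c) (Wq c) ->
        0 <= fq c / (- gam c (nq c)) /\
        infL c (/ (gam c (nq c)) ^ 2 * ((lC c 0) ^ 2 +
             sumR (fun i => (lC c i) ^ 2 / (1 - gam c i / gam c (nq c)) ^ 2) 1 (nq c - 1))
           + (zetaq c) ^ 2) /\
        set_eq (What c) (fun w => single (vq c 1) w \/ single (vq c (-1)) w))).
Proof.
  split; [apply nonLag_solution, Hreg|]. split; [apply multLag_solution, Hreg|].
  intros HS. split; [|split; [|split; [|split; [|split]]]].
  - destruct (singLag_stationary c Hreg HS) as [[lam [Hl Hf]]|[Hne|[Hq Hne]]].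
    + left. apply (Wcirc_case c Hreg lam); auto.
    + right; left. apply W1_case; auto.
    + right; right. apply Wq_case; auto.
  - intros Hq. destruct (fC_neg_somewhere c Hreg HS Hq) as [l1 [Hl1 Hf1]].
    split; [eauto | split].
    + intros [l2 [Hl2 Hf2]]. apply (What_eq_Wcirc_of_sign_change c Hreg l1 l2); auto.
    + apply What_eq_W1_of_fC_nonpos, Hreg.
  - intros Hq. split; [|split].
    + intros [[l1 [Hl1 Hf1]] [l2 [Hl2 Hf2]]]. apply (What_eq_Wcirc_of_sign_change c Hreg l1 l2); auto.
    + apply What_eq_W1_of_fC_nonpos, Hreg.
    + apply What_eq_Wq_of_fC_nonneg; auto.
  - apply Wcirc_solution; auto.
  - apply W1_solution; auto.
  - intros Hq. apply Wq_solution; auto.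
Qed.
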